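(* Let $f:\{1,\dots,n\}\to\{0,1\}$, let $S=\{i: f(i)=1\}$, and let $T=f(1)f(2)\cdots f(n)$. Then the number $r$ of runs in the Burrows–Wheeler Transform of $T$ satisfies $r\le 2|S|+1$.
   Context: The Burrows–Wheeler Transform (BWT) of $T$ is the last column of the matrix whose rows are the cyclic rotations of $T$ sorted lexicographically; it is a permutation of the symbols of $T$. $r$ is the number of maximal runs of equal consecutive symbols in the BWT. *)

From mathcomp Require Import all_boot.
Set Implicit Arguments. Unset Strict Implicit. Unset Printing Implicit Defensive.

Fixpoint lex_le (s t : seq nat) : bool :=
  match s, t with
  | [::], _ => true
  | _ :: _, [::] => false
  | x :: s', y :: t' => (x < y) || ((x == y) && lex_le s' t')
  end.

Definition rotations (T : seq nat) : seq (seq nat) :=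
  [seq rot i T | i <- iota 0 (size T)].

Definition bwt (T : seq nat) : seq nat :=
  [seq last 0 row | row <- sort lex_le (rotations T)].

Definition runs (s : seq nat) : nat :=
  match s with
  | [::] => 0
  | x :: s' => (count (fun p : nat * nat => p.1 != p.2) (zip (x :: s') s')).+1
  end.

Definition word_of (n : nat) (f : 'I_n -> bool) : seq nat :=
  [seq nat_of_bool (f i) | i <- enum 'I_n].

(* A change between adjacent symbols of a word always involves a symbol
   different from a fixed letter a, and each position takes part in at most two
   changes; hence a word with k symbols other than a has at most 2k + 1 runs.
   The BWT is a permutation of T (its entries are the last symbols of the
   rotations of T, which together form rotr 1 T), so it has exactly |S| ones. *)

From mathcomp Require Import all_boot zify.

Lemma runs_cons2 (x y : nat) (s : seq nat) :
  runs [:: x, y & s] = (x != y) + runs (y :: s).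
Proof. by rewrite /runs /= addnS. Qed.

Lemma runs_le_count_neq (a : nat) (s : seq nat) :
  runs s <= (count (predC1 a) s).*2.+1.
Proof.
suff run_bound x t : runs (x :: t) + (x != a) <= (count (predC1 a) (x :: t)).*2.+1.
  by case: s => [|x t] //; apply: leq_trans (run_bound x t); apply: leq_addr.
elim: t x => [|y t IHt] x; first by rewrite /=; case: (x != a).
have neq_via_a : (x != y) <= (x != a) + (y != a).
  by case: (x =P a) => [->|_]; case: (y =P a) => [->|_];
    rewrite ?eqxx //; case: (_ != _).
rewrite runs_cons2; have := IHt y; rewrite /=; lia.
Qed.

Lemma head_rot (T : Type) (x0 : T) (s : seq T) (i : nat) :
  i < size s -> head x0 (rot i s) = nth x0 s i.
Proof.
move=> lt_i_s; rewrite /rot -nth0 nth_cat size_drop subn_gt0 lt_i_s.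
by rewrite nth_drop addn0.
Qed.

Lemma map_last_rot_iota (T : Type) (x0 : T) (s : seq T) :
  [seq last x0 (rot i s) | i <- iota 0 (size s)] = rotr 1 s.
Proof.
case/lastP: s => [|s x] //.
have last_rot i : last x0 (rot i (rcons s x)) = head x0 (rot i (x :: s)).
  by rewrite -rotr1_rcons rot_rotr; case/lastP: (rot i _) => [|t y];
    rewrite ?rotr1_rcons ?last_rcons.
rewrite rotr1_rcons -[RHS](mkseq_nth x0) size_rcons /mkseq.
apply/eq_in_map => i; rewrite mem_iota => /andP[_ lt_i_s].
by rewrite last_rot head_rot.
Qed.

Lemma perm_bwt (T : seq nat) : perm_eq (bwt T) T.
Proof.
apply: perm_trans (perm_map _ (permEl (perm_sort lex_le _))) _.
by rewrite /rotations -map_comp map_last_rot_iota perm_rotr.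
Qed.

Lemma count_word_of (n : nat) (f : 'I_n -> bool) :
  count (predC1 0) (word_of f) = #|[set i | f i]|.
Proof.
rewrite count_map cardsE cardE enumT -size_filter.
by congr size; apply: eq_filter => i /=; rewrite unfold_in; case: (f i).
Qed.

Theorem lemma12 (n : nat) (f : 'I_n -> bool) :
  runs (bwt (word_of f)) <= 2 * #|[set i | f i]| + 1.
Proof.
rewrite -count_word_of -(permP (perm_bwt (word_of f))) mul2n addn1.
exact: runs_le_count_neq.
Qed.
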